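(* Let $A\in\mathbb{R}^{m\times n}$ be semimonotone ($A^{\dagger}\geq 0$) and let $(U_k,V_k,E_k)_{k=1}^{p}$ be a proper weak regular multisplitting of $A$ such that $R(E_k)\subseteq R(A^{T})$ for each $k=1,\ldots,p$. Let $H=\sum_{k=1}^{p}E_kU_k^{\dagger}V_k$. Then $I-H$ is invertible, and with $B=A(I-H)^{-1}$ and $C=B-A$, the splitting $A=B-C$ is the unique proper splitting of $A$ induced by $H$ (i.e. with $B^{\dagger}C=H$), and it is a convergent proper weak regular splitting.
   Context: $A^{\dagger}$ denotes the Moore–Penrose inverse, $\rho(\cdot)$ the spectral radius, $R(\cdot)$ and $N(\cdot)$ range and null space; inequalities are entrywise. A splitting $A=U-V$ is proper if $R(U)=R(A)$ and $N(U)=N(A)$; it is convergent if $\rho(U^{\dagger}V)<1$; a proper splitting is proper weak regular if $U^{\dagger}\geq 0$ and $U^{\dagger}V\geq 0$. A triplet $(U_k,V_k,E_k)_{k=1}^{p}$ is a proper multisplitting of $A\in\mathbb{R}^{m\times n}$ if each $A=U_k-V_k$ is a proper splitting and each $E_k\geq 0$ is an $n\times n$ diagonal matrix with $\sum_{k=1}^{p}E_k=I_n$; it is a proper weak regular multisplitting if each $A=U_k-V_k$ is a proper weak regular splitting. A splitting $A=B-C$ is said to be induced by $H$ if $B^{\dagger}C=H$. *)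

From HB Require Import structures.
From mathcomp Require Import all_boot all_order all_algebra.
From mathcomp Require Import reals.
From mathcomp.real_closed Require Import complex.
From Stdlib Require Import ClassicalEpsilon.
Set Implicit Arguments. Unset Strict Implicit. Unset Printing Implicit Defensive.
Import Order.TTheory GRing.Theory Num.Theory.
Local Open Scope ring_scope.

Section Defs.
Variable R : realType.

Definition is_mp_inverse {m n} (A : 'M[R]_(m, n)) (X : 'M[R]_(n, m)) : Prop :=
  [/\ A *m X *m A = A, X *m A *m X = X,
      (A *m X)^T = A *m X & (X *m A)^T = X *m A].

(* A^dagger: the (unique, existing) matrix satisfying the Penrose equations. *)
Definition mpinv {m n} (A : 'M[R]_(m, n)) : 'M[R]_(n, m) :=
  epsilon (inhabits 0) (is_mp_inverse A).

Definition nonneg_mx {m n} (M : 'M[R]_(m, n)) : Prop :=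
  forall i j, 0 <= M i j.

Definition in_range {m n} (U : 'M[R]_(m, n)) (y : 'cV[R]_m) : Prop :=
  exists x : 'cV[R]_n, y = U *m x.
Definition in_null {m n} (U : 'M[R]_(m, n)) (x : 'cV[R]_n) : Prop :=
  U *m x = 0.

Definition proper_splitting {m n} (A U V : 'M[R]_(m, n)) : Prop :=
  [/\ A = U - V,
      (forall y, in_range U y <-> in_range A y) &
      (forall x, in_null U x <-> in_null A x)].

Definition spectral_radius_lt1 {n} (M : 'M[R]_n) : Prop :=
  forall z : R[i], eigenvalue (map_mx (real_complex R) M) z -> `|z| < 1.

Definition convergent_splitting {m n} (U V : 'M[R]_(m, n)) : Prop :=
  spectral_radius_lt1 (mpinv U *m V).

Definition proper_weak_regular {m n} (A U V : 'M[R]_(m, n)) : Prop :=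
  [/\ proper_splitting A U V, nonneg_mx (mpinv U) & nonneg_mx (mpinv U *m V)].

End Defs.

From HB Require Import structures.
From mathcomp Require Import all_boot all_order all_algebra.
From mathcomp Require Import reals.
From mathcomp.real_closed Require Import complex.
From Stdlib Require Import ClassicalEpsilon.
Import Order.TTheory GRing.Theory Num.Theory.
Set Implicit Arguments. Unset Strict Implicit.
Local Open Scope ring_scope.

(* Since R(E_k) ⊆ R(A^T) and ΣE_k = I, we get A^†A = I, so A has a trivial
   null space and U_k^†V_k = I - U_k^†A for every k.  Hence I - H = GA with
   G = Σ E_k U_k^† ≥ 0, and x = A^†1 ≥ 0 satisfies (I - H)x = G1 > 0, i.e.
   Hx < x entrywise with H ≥ 0.  Such a strictly subinvariant vector forces
   every eigenvalue of H into the open unit disc, so I - H is invertible and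
   ρ(H) < 1.  For any H with I - H invertible and A injective,
   B = A(I - H)^{-1} is the only proper splitting with B^†C = H, and
   B^† = (I - H)A^† = G ≥ 0. *)

Lemma eq_mulmx_cV (R : pzRingType) m n (M N : 'M[R]_(m, n)) :
  (forall x : 'cV[R]_n, M *m x = N *m x) -> M = N.
Proof.
move=> eqMN; apply/matrixP => i j.
have := congr1 (fun x : 'cV[R]_m => x i 0) (eqMN (delta_mx j 0)).
by rewrite /= -!colE /col !mxE.
Qed.

Lemma unitmx_lker0 (F : fieldType) n (M : 'M[F]_n) :
  (forall v : 'rV[F]_n, v *m M = 0 -> v = 0) -> M \in unitmx.
Proof.
move=> lker0; rewrite -row_free_unit -kermx_eq0; apply/eqP/row_matrixP => i.
by rewrite row0; apply: lker0; rewrite -row_mul mulmx_ker row0.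
Qed.

Lemma psumr_gt0 (F : numDomainType) (I : finType) (f : I -> F) i0 :
  (forall i, 0 <= f i) -> 0 < f i0 -> 0 < \sum_i f i.
Proof.
move=> f_ge0 fi0; rewrite (bigD1 i0) //=.
by apply: (lt_le_trans fi0); rewrite lerDl sumr_ge0.
Qed.

Section SubinvariantVector.
Variables (F : numFieldType) (n : nat) (M : 'M[F]_n) (x : 'cV[F]_n).
Hypothesis M_ge0 : forall i j, 0 <= M i j.
Hypothesis x_ge0 : forall i, 0 <= x i 0.
Hypothesis Mx_lt_x : forall i, (M *m x) i 0 < x i 0.

(* With a = |v|, the weighted sums S = a·x and T = a·(Mx) satisfy
   |z| S <= T < S. *)
Lemma left_eigenvalue_norm_lt1 (v : 'rV[F]_n) z :
  v *m M = z *: v -> v != 0 -> `|z| < 1.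
Proof.
move=> eigv v_neq0; pose a i := `|v 0 i|.
have a_ge0 i : 0 <= a i by exact: normr_ge0.
have eig_bound j : `|z| * a j <= \sum_i a i * M i j.
  rewrite /a -normrM.
  have -> : z * v 0 j = (v *m M) 0 j by rewrite eigv !mxE.
  rewrite mxE; apply: le_trans (ler_norm_sum _ _ _) _.
  by apply: ler_sum => i _; rewrite normrM (ger0_norm (M_ge0 i j)).
pose S := \sum_j a j * x j 0.
pose T := \sum_i a i * (M *m x) i 0.
have zS_le_T : `|z| * S <= T.
  have -> : T = \sum_j (\sum_i a i * M i j) * x j 0.
    rewrite /T; under eq_bigr do rewrite mxE mulr_sumr.
    rewrite exchange_big /=; apply: eq_bigr => j _.
    by rewrite mulr_suml; apply: eq_bigr => i _; rewrite mulrA.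
  rewrite mulr_sumr; apply: ler_sum => j _; rewrite mulrA.
  by apply: ler_wpM2r => //; exact: eig_bound.
have T_ge0 : 0 <= T.
  apply: sumr_ge0 => i _; apply: mulr_ge0 => //; rewrite mxE.
  by apply: sumr_ge0 => j _; exact: mulr_ge0.
have T_lt_S : T < S.
  have [i0 vi0 | v0] := pickP (fun i => v 0 i != 0); last first.
    by case/eqP: v_neq0; apply/rowP => i; apply/eqP; rewrite mxE; exact/negbFE/v0.
  rewrite /T /S (bigD1 i0) //= [X in _ < X](bigD1 i0) //=.
  apply: ltr_leD; first by rewrite ltr_pM2l ?normr_gt0.
  by apply: ler_sum => i _; apply: ler_wpM2l => //; exact: ltW.
have S_gt0 : 0 < S by exact: le_lt_trans T_lt_S.
by rewrite -(ltr_pM2r S_gt0) mul1r; exact: le_lt_trans T_lt_S.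
Qed.

Lemma unitmx_1B_subinvariant : 1%:M - M \in unitmx.
Proof.
apply: unitmx_lker0 => v; rewrite mulmxBr mulmx1 => /eqP; rewrite subr_eq0 => /eqP vM.
apply/eqP/negPn/negP => v_neq0.
have := left_eigenvalue_norm_lt1 (z := 1) _ v_neq0.
by rewrite scale1r normr1 ltxx => /(_ (esym vM)).
Qed.

End SubinvariantVector.

Section MoorePenrose.
Variable R : realType.

Lemma mulmx_trmx_eq0 k (w : 'rV[R]_k) : w *m w^T = 0 -> w = 0.
Proof.
move=> /(congr1 (fun X : 'M[R]_1 => X 0 0)); rewrite !mxE => /eqP.
rewrite psumr_eq0 => [/allP sq0|i _]; last by rewrite !mxE -expr2 sqr_ge0.
apply/rowP => j; have := sq0 j (mem_index_enum j).
by rewrite !mxE /= -expr2 sqrf_eq0 => /eqP.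
Qed.

Lemma gram_unitmx k l (M : 'M[R]_(k, l)) : row_free M -> M *m M^T \in unitmx.
Proof.
move=> freeM; apply: unitmx_lker0 => v; rewrite mulmxA => vMMT.
have /mulmx_trmx_eq0/eqP : (v *m M) *m (v *m M)^T = 0.
  by rewrite trmx_mul mulmxA vMMT mul0mx.
by rewrite (mulmx_free_eq0 _ freeM) => /eqP.
Qed.

Lemma is_mp_inverse_full_rank_mul m n r (F : 'M[R]_(m, r)) (G : 'M[R]_(r, n)) :
  row_free F^T -> row_free G -> exists X, is_mp_inverse (F *m G) X.
Proof.
move=> freeFT freeG.
have unitF : F^T *m F \in unitmx by have := gram_unitmx freeFT; rewrite trmxK.
have unitG := gram_unitmx freeG.
set P := invmx (G *m G^T); set Q := invmx (F^T *m F).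
exists (G^T *m P *m Q *m F^T).
have symQ : Q^T = Q by rewrite /Q trmx_inv trmx_mul trmxK.
have symP : P^T = P by rewrite /P trmx_inv trmx_mul trmxK.
have QF k (N : 'M[R]_(k, r)) : N *m Q *m F^T *m F = N.
  by rewrite -!mulmxA /Q mulVmx // mulmx1.
have GP k (N : 'M[R]_(k, r)) : N *m G *m G^T *m P = N.
  by rewrite -!mulmxA /P (mulmxA G) mulmxV // mulmx1.
split; rewrite !mulmxA ?GP ?QF ?GP //.
  by rewrite !trmx_mul !trmxK symQ !mulmxA.
by rewrite !trmx_mul !trmxK symP !mulmxA.
Qed.

Lemma mpinvP m n (A : 'M[R]_(m, n)) : is_mp_inverse A (mpinv A).
Proof.
apply: epsilon_spec.
have freeCT : row_free (col_base A)^T.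
  by rewrite /row_free mxrank_tr; exact: col_base_full.
by have := is_mp_inverse_full_rank_mul freeCT (row_base_free A); rewrite mulmx_base.
Qed.

Lemma mpinv_mul_range_tr m n (A : 'M[R]_(m, n)) y :
  in_range A^T y -> mpinv A *m A *m y = y.
Proof.
have [AXA _ _ symXA] := mpinvP A; move=> [w ->].
by rewrite mulmxA -symXA -trmx_mul mulmxA AXA.
Qed.

Lemma ginv_left_inverse m n (M : 'M[R]_(m, n)) (Y : 'M[R]_(n, m)) :
  (forall x, in_null M x -> x = 0) -> M *m Y *m M = M -> Y *m M = 1%:M.
Proof.
move=> lker0 MYM; apply: eq_mulmx_cV => y; rewrite mul1mx; apply/eqP.
by rewrite -subr_eq0; apply/eqP/lker0; rewrite /in_null mulmxBr !mulmxA MYM subrr.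
Qed.

Lemma ginv_range_proj m n k (M : 'M[R]_(m, n)) (Z : 'M[R]_(m, k)) (Y : 'M[R]_(k, m)) :
  (forall y, in_range M y -> in_range Z y) -> Z *m Y *m Z = Z -> Z *m Y *m M = M.
Proof.
move=> rangeMZ ZYZ; apply: eq_mulmx_cV => y.
have [w My] := rangeMZ (M *m y) (ex_intro _ y erefl).
by rewrite -[LHS]mulmxA My mulmxA ZYZ.
Qed.

Lemma is_mp_inverse_annihilator m k (Z : 'M[R]_(m, k)) Y (P : 'M[R]_m) :
  is_mp_inverse Z Y -> P^T = P -> P *m Z = 0 -> Y *m P = 0.
Proof.
case=> _ YZY symZY _ symP PZ.
have -> : Y = Y *m Y^T *m Z^T by rewrite -{1}YZY -mulmxA -symZY trmx_mul mulmxA.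
have ZTP : Z^T *m P = 0 by rewrite -symP -trmx_mul PZ trmx0.
by rewrite -mulmxA ZTP mulmx0.
Qed.

Lemma mpinv_mul_range_proj m n k (Z : 'M[R]_(m, k)) (M : 'M[R]_(m, n)) :
  (forall y, in_range Z y -> in_range M y) -> mpinv Z *m M *m mpinv M = mpinv Z.
Proof.
move=> rangeZM; have [MXM _ symMX _] := mpinvP M.
have projZ : (1%:M - M *m mpinv M) *m Z = 0.
  apply: eq_mulmx_cV => y; rewrite mul0mx.
  have [w Zy] := rangeZM (Z *m y) (ex_intro _ y erefl).
  by rewrite -mulmxA Zy mulmxA mulmxBl mul1mx MXM subrr mul0mx.
have := is_mp_inverse_annihilator (mpinvP Z) _ projZ.
rewrite raddfB /= trmx1 symMX => /(_ erefl) /eqP.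
by rewrite mulmxBr mulmx1 subr_eq0 mulmxA => /eqP.
Qed.

Lemma nonneg_mulmx m n k (M : 'M[R]_(m, n)) (N : 'M[R]_(n, k)) :
  nonneg_mx M -> nonneg_mx N -> nonneg_mx (M *m N).
Proof.
by move=> M_ge0 N_ge0 i j; rewrite mxE; apply: sumr_ge0 => l _; exact: mulr_ge0.
Qed.

Lemma nonneg_left_inverse_row_gt0 m n (Y : 'M[R]_(n, m)) (M : 'M[R]_(m, n)) i :
  nonneg_mx Y -> Y *m M = 1%:M -> exists j, 0 < Y i j.
Proof.
move=> Y_ge0 YM; have [j Yij | Yi0] := pickP (fun j => 0 < Y i j); first by exists j.
have : (Y *m M) i i = 0.
  rewrite mxE; apply: big1 => j _.
  have -> : Y i j = 0 by apply/eqP; rewrite eq_le Y_ge0 andbT leNgt Yi0.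
  exact: mul0r.
by rewrite YM mxE eqxx mulr1n => /eqP; rewrite oner_eq0.
Qed.

Lemma nonneg_summx m n p (M : 'I_p -> 'M[R]_(m, n)) :
  (forall k, nonneg_mx (M k)) -> nonneg_mx (\sum_(k < p) M k).
Proof. by move=> M_ge0 i j; rewrite summxE; apply: sumr_ge0 => k _; exact: M_ge0. Qed.

Lemma subinvariant_spectral_radius_lt1 n (M : 'M[R]_n) (x : 'cV[R]_n) :
  nonneg_mx M -> (forall i, 0 <= x i 0) -> (forall i, (M *m x) i 0 < x i 0) ->
  spectral_radius_lt1 M.
Proof.
move=> M_ge0 x_ge0 Mx_lt_x z /eigenvalueP [v eigv v_neq0].
have cE k l (N : 'M[R]_(k, l)) i j :
  map_mx (real_complex R) N i j = real_complex R (N i j) by rewrite mxE.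
apply: (left_eigenvalue_norm_lt1 (x := map_mx (real_complex R) x) _ _ _ eigv v_neq0).
- by move=> i j; rewrite cE -(rmorph0 (real_complex R)) lecR.
- by move=> i; rewrite cE -(rmorph0 (real_complex R)) lecR.
- by move=> i; rewrite -map_mxM !cE ltcR.
Qed.

End MoorePenrose.

Section InducedSplitting.
Variables (R : realType) (m n : nat) (A : 'M[R]_(m, n)) (H : 'M[R]_n).
Hypothesis A_lker0 : forall x, in_null A x -> x = 0.
Hypothesis unit_1BH : 1%:M - H \in unitmx.
Local Notation B := (A *m invmx (1%:M - H)).

Lemma induced_mul_1B : B *m (1%:M - H) = A.
Proof. by rewrite -mulmxA mulVmx // mulmx1. Qed.

Lemma induced_lker0 x : in_null B x -> x = 0.
Proof.
rewrite /in_null -mulmxA => /A_lker0 x0.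
by rewrite -[x]mul1mx -(mulmxV unit_1BH) -mulmxA x0 mulmx0.
Qed.

Lemma mpinv_induced_mul : mpinv B *m B = 1%:M.
Proof. by have [BXB _ _ _] := mpinvP B; exact: ginv_left_inverse induced_lker0 BXB. Qed.

Lemma mpinv_induced_mulA : mpinv B *m A = 1%:M - H.
Proof.
have := congr1 (mulmx (mpinv B)) induced_mul_1B.
by rewrite mulmxA mpinv_induced_mul mul1mx => /esym.
Qed.

Lemma induced_proper_splitting : proper_splitting A B (B - A).
Proof.
split; first by rewrite opprB addrC subrK.
- move=> y; split=> -[w ->].
    by exists (invmx (1%:M - H) *m w); rewrite mulmxA.
  by exists ((1%:M - H) *m w); rewrite mulmxA induced_mul_1B.
- move=> x; split=> [/induced_lker0|/A_lker0] ->; exact: mulmx0.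
Qed.

Lemma induced_splitting_mpinv : mpinv B *m (B - A) = H.
Proof. by rewrite mulmxBr mpinv_induced_mul mpinv_induced_mulA opprB addrC subrK. Qed.

Lemma mpinv_induced : mpinv B = (1%:M - H) *m mpinv A.
Proof.
rewrite -[in RHS]mpinv_induced_mulA mpinv_mul_range_proj // => _ [w ->].
by exists (invmx (1%:M - H) *m w); rewrite mulmxA.
Qed.

Lemma induced_splitting_unique (B' C' : 'M[R]_(m, n)) :
  proper_splitting A B' C' -> mpinv B' *m C' = H -> B' = B /\ C' = B - A.
Proof.
move=> [AB'C' rangeB' nullB'] B'C'.
have [BXB _ _ _] := mpinvP B'.
have C'E : C' = B' - A by rewrite AB'C' opprB addrC subrK.
have B'_lker0 x : in_null B' x -> x = 0 by move/nullB'/A_lker0.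
have XA : mpinv B' *m A = 1%:M - H.
  by rewrite -B'C' C'E mulmxBr (ginv_left_inverse B'_lker0 BXB) opprB addrC subrK.
have B'H : B' *m (1%:M - H) = A.
  by rewrite -XA mulmxA (ginv_range_proj (fun y => (rangeB' y).2) BXB).
have B'E : B' = B by rewrite -B'H -mulmxA mulmxV // mulmx1.
by rewrite C'E B'E.
Qed.

End InducedSplitting.

Section ProperMultisplitting.
Variables (R : realType) (m n p : nat) (A : 'M[R]_(m, n)).
Variables (U V : 'I_p -> 'M[R]_(m, n)) (E : 'I_p -> 'M[R]_n).
Hypothesis mpinvA_ge0 : nonneg_mx (mpinv A).
Hypothesis splitU : forall k, proper_weak_regular A (U k) (V k).
Hypothesis E_ge0 : forall k, nonneg_mx (E k).
Hypothesis sumE : \sum_(k < p) E k = 1%:M.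
Hypothesis rangeE : forall k y, in_range (E k) y -> in_range A^T y.
Local Notation H := (\sum_(k < p) (E k *m mpinv (U k) *m V k)).
Local Notation G := (\sum_(k < p) E k *m mpinv (U k)).
Local Notation one := (const_mx 1 : 'cV[R]_m).
Local Notation x := (mpinv A *m one).

Lemma multisplitting_mpinv_mulA : mpinv A *m A = 1%:M.
Proof.
apply: eq_mulmx_cV => y; rewrite mul1mx -(mul1mx y) -sumE mulmx_suml mulmx_sumr.
apply: eq_bigr => k _; rewrite mpinv_mul_range_tr //.
exact: rangeE (ex_intro _ y erefl).
Qed.

Lemma multisplitting_lker0 z : in_null A z -> z = 0.
Proof.
by move=> Az0; rewrite -[z]mul1mx -multisplitting_mpinv_mulA -mulmxA Az0 mulmx0.
Qed.

Lemma mpinv_mul_splitting k : mpinv (U k) *m U k = 1%:M.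
Proof.
have [[_ _ nullU] _ _] := splitU k; have [UYU _ _ _] := mpinvP (U k).
by apply: ginv_left_inverse UYU => z /nullU/multisplitting_lker0.
Qed.

Lemma mpinv_mul_splittingV k : mpinv (U k) *m V k = 1%:M - mpinv (U k) *m A.
Proof.
have [[AUV _ _] _ _] := splitU k.
by rewrite -(mpinv_mul_splitting k) -mulmxBr AUV opprB addrC subrK.
Qed.

Lemma one_sub_multisplitting : 1%:M - H = G *m A.
Proof.
rewrite mulmx_suml.
under eq_bigr do rewrite -mulmxA mpinv_mul_splittingV mulmxBr mulmx1 mulmxA.
by rewrite sumrB sumE opprB addrC subrK.
Qed.

Lemma multisplitting_proj : G *m A *m mpinv A = G.
Proof.
rewrite !mulmx_suml; apply: eq_bigr => k _; have [[_ rangeU _] _ _] := splitU k.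
by rewrite -!mulmxA (mulmxA (mpinv (U k))) mpinv_mul_range_proj // => y /rangeU.
Qed.

Lemma multisplitting_G_ge0 : nonneg_mx G.
Proof. by apply: nonneg_summx => k; apply: nonneg_mulmx => //; case: (splitU k). Qed.

Lemma multisplitting_H_ge0 : nonneg_mx H.
Proof.
apply: nonneg_summx => k; rewrite -mulmxA; apply: nonneg_mulmx => //.
by case: (splitU k).
Qed.

Lemma multisplitting_G_row_gt0 i : exists j, 0 < G i j.
Proof.
have [k /andP[_ Ekii]] : exists k, true && (0 < E k i i).
  apply: psumr_neq0P => [k _|]; first exact: E_ge0.
  by rewrite -summxE sumE mxE eqxx mulr1n; exact/eqP/oner_neq0.
have [_ Yk_ge0 _] := splitU k.
have [j Ykij] := nonneg_left_inverse_row_gt0 i Yk_ge0 (mpinv_mul_splitting k).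
exists j; rewrite summxE (psumr_gt0 (i0 := k)) // => [l|].
  by apply: nonneg_mulmx => //; case: (splitU l).
rewrite mxE (psumr_gt0 (i0 := i)) ?mulr_gt0 // => l.
exact: mulr_ge0 (E_ge0 k i l) (Yk_ge0 l j).
Qed.

Lemma multisplitting_x_ge0 i : 0 <= x i 0.
Proof. by apply: nonneg_mulmx => // ? ?; rewrite mxE ler01. Qed.

(* (I - H) x = G A A^† 1 = G 1, and every row of G >= 0 has a positive entry. *)
Lemma multisplitting_subinvariant i : (H *m x) i 0 < x i 0.
Proof.
have [j Gij] := multisplitting_G_row_gt0 i.
have : 0 < (G *m one) i 0.
  rewrite mxE (psumr_gt0 (i0 := j)) // => [l|]; rewrite mxE mulr1 //.
  exact: multisplitting_G_ge0.
rewrite -multisplitting_proj -mulmxA -one_sub_multisplitting.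
by rewrite mulmxBl mul1mx !mxE subr_gt0.
Qed.

End ProperMultisplitting.

Unset Implicit Arguments. Set Strict Implicit.

Theorem theorem5p5 (R : realType) (m n p : nat) (A : 'M[R]_(m, n))
    (U V : 'I_p -> 'M[R]_(m, n)) (E : 'I_p -> 'M[R]_n) :
  nonneg_mx (mpinv A) ->
  (forall k, proper_weak_regular A (U k) (V k)) ->
  (forall k, is_diag_mx (E k) /\ nonneg_mx (E k)) ->
  \sum_(k < p) E k = 1%:M ->
  (forall k (y : 'cV[R]_n), in_range (E k) y -> in_range A^T y) ->
  let H := \sum_(k < p) (E k *m mpinv (U k) *m V k) in
  let B := A *m invmx (1%:M - H) in
  let C := B - A in
  [/\ (1%:M - H) \in unitmx,
      proper_splitting A B C /\ mpinv B *m C = H,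
      (forall B' C' : 'M[R]_(m, n),
          proper_splitting A B' C' -> mpinv B' *m C' = H -> B' = B /\ C' = C),
      convergent_splitting B C &
      proper_weak_regular A B C].
Proof.
move=> mpinvA_ge0 splitU E_diag_ge0 sumE rangeE H B C.
have E_ge0 k : nonneg_mx (E k) := (E_diag_ge0 k).2.
have lker0 := multisplitting_lker0 sumE rangeE.
have H_ge0 := multisplitting_H_ge0 splitU E_ge0.
have subinv := multisplitting_subinvariant splitU E_ge0 sumE rangeE.
have x_ge0 := multisplitting_x_ge0 mpinvA_ge0.
have unitH : 1%:M - H \in unitmx := unitmx_1B_subinvariant H_ge0 x_ge0 subinv.
have mpinvBC : mpinv B *m C = H := induced_splitting_mpinv lker0 unitH.
have splitB : proper_splitting A B C := induced_proper_splitting lker0 unitH.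
split=> //.
- exact: induced_splitting_unique.
- rewrite /convergent_splitting mpinvBC.
  exact: subinvariant_spectral_radius_lt1 subinv.
- split=> //; last by rewrite mpinvBC.
  rewrite (mpinv_induced lker0 unitH) /H (one_sub_multisplitting splitU sumE rangeE).
  by rewrite (multisplitting_proj E splitU); exact: multisplitting_G_ge0.
Qed.
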